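(* In the setting below, if $\{\mathbb G(t)\}$ is uniformly strongly connected, then for every fixed $\tau\ge0$, $S(t)\cdots S(\tau+1)S(\tau)\to\frac1n\mathbf 1\,y^\top(\tau)$ as $t\to\infty$, where $y(\tau)=(y_1(\tau),\dots,y_n(\tau))^\top$ and $\mathbf 1$ is the all-ones vector.
   Context: Setting. Fix $n$ agents, $\mathcal V=\{1,\dots,n\}$. For each $t\in\{0,1,2,\dots\}$, $\mathbb G(t)=(\mathcal V,\mathcal E(t))$ is a directed graph containing a self-arc $(i,i)$ at every vertex; $\mathcal N_i(t)=\{j:(j,i)\in\mathcal E(t)\}$ and $\mathcal N_i^-(t)=\{k:(i,k)\in\mathcal E(t)\}$. Weights $w_{ij}(t)$ are positive for $j\in\mathcal N_i(t)$ and $w_{ij}(t)=0$ otherwise, and satisfy: there is $\beta>0$ with $w_{ij}(t)\ge\beta$ whenever $j\in\mathcal N_i(t)$, and $\sum_{j\in\mathcal N_i^-(t)}w_{ji}(t)=1$ for all $i,t$. Thus $W(t)=[w_{ij}(t)]$ is column stochastic with positive diagonal. The sequence $\{\mathbb G(t)\}$ is uniformly strongly connected if there is a positive integer $L$ such that for every $t\ge0$ the directed graph with vertex set $\mathcal V$ and edge set $\bigcup_{k=t}^{t+L-1}\mathcal E(k)$ is strongly connected. The $y$-iteration of push-sum: $y_i(t+1)=\sum_{j}w_{ij}(t)y_j(t)$, $y_i(0)=1$. Define $S(t)$ with entries $s_{ij}(t)=w_{ij}(t)y_j(t)/y_i(t+1)$. *)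

From HB Require Import structures.
From mathcomp Require Import all_boot all_order all_algebra.
From mathcomp Require Import all_classical all_reals all_analysis.
Set Implicit Arguments. Unset Strict Implicit. Unset Printing Implicit Defensive.
Import Order.TTheory GRing.Theory Num.Theory.
Local Open Scope ring_scope.

(* Edge sets: E t j i  means  (j,i) \in E(t), i.e. j is an in-neighbour of i. *)

Definition union_rel (n : nat) (E : nat -> rel 'I_n) (t L : nat) : rel 'I_n :=
  fun a b => [exists k : 'I_L, E (t + k)%N a b].

Definition strongly_connected (n : nat) (e : rel 'I_n) : Prop :=
  forall i j : 'I_n, connect e i j.

Definition uniformly_strongly_connected (n : nat) (E : nat -> rel 'I_n) : Prop :=
  exists L : nat, (0 < L)%N /\ forall t, strongly_connected (union_rel E t L).

Fixpoint ypush (R : realType) (n : nat) (W : nat -> 'M[R]_n) (t : nat) : 'cV[R]_n :=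
  match t with
  | 0 => const_mx 1
  | t'.+1 => W t' *m ypush W t'
  end.

Definition Smat (R : realType) (n : nat) (W : nat -> 'M[R]_n) (t : nat) : 'M[R]_n :=
  \matrix_(i, j) (W t i j * ypush W t j ord0 / ypush W t.+1 i ord0).

(* Sprod W tau k = S(tau+k) ... S(tau+1) S(tau) *)
Fixpoint Sprod (R : realType) (n : nat) (W : nat -> 'M[R]_n) (tau k : nat) : 'M[R]_n :=
  match k with
  | 0 => Smat W tau
  | k'.+1 => Smat W (tau + k'.+1)%N *m Sprod W tau k'
  end.

From HB Require Import structures.
From mathcomp Require Import all_boot all_order all_algebra.
From mathcomp Require Import all_classical all_reals all_analysis.
From mathcomp Require Import zify ring lra.
Import Order.TTheory GRing.Theory Num.Theory numFieldNormedType.Exports.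
Set Implicit Arguments. Unset Strict Implicit. Unset Printing Implicit Defensive.
Local Open Scope ring_scope.

(* Write P(s,k) = W(s+k-1) ... W(s) for the backward products
   of the column-stochastic weight matrices.  Since y(s+k) = P(s,k) y(s), the
   entries of S(tau+k) ... S(tau) are  P(tau,k+1)_ij y_j(tau) / y_i(tau+k+1)
   (Sprod_bprod).  The argument then has three parts:
   - ergodicity: with self-loops of weight >= beta and uniformly strongly
     connected graphs, the set of vertices reached from j grows by one vertex
     per window of length L, so after n windows every entry of P is at least
     beta^(nL) (bprod_pos);
   - contraction: a column-stochastic matrix with all entries >= delta shrinks
     the l1 distance between two columns of equal sum by 1 - n delta
     (coldist_mul), so the columns of P(tau,k) merge geometrically
     (bprod_coldist_vanish);
   - normalisation: once the row (P_il)_l is almost constant, the ratio above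
     is close to y_j(tau)/n, with an error controlled because y_i stays above
     n beta^(nL) (weighted_ratio_dev, ypush_window_lb). *)

Definition coldist (R : numDomainType) m n (M : 'M[R]_(m, n)) (j l : 'I_n) : R :=
  \sum_a `|M a j - M a l|.

Lemma coldist_entry (R : numDomainType) m n (M : 'M[R]_(m, n)) a j l :
  `|M a j - M a l| <= coldist M j l.
Proof.
rewrite /coldist (bigD1 a) //= lerDl; exact: sumr_ge0.
Qed.

Lemma contract_zero_sum (R : numDomainType) m n (Q : 'M[R]_(m, n))
    (d : 'I_n -> R) (delta : R) :
  (forall i a, delta <= Q i a) -> (forall a, \sum_i Q i a = 1) -> \sum_a d a = 0 ->
  \sum_i `|\sum_a Q i a * d a| <= (1 - m%:R * delta) * \sum_a `|d a|.
Proof.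
move=> Q_ge Q_col d_sum0.
have shift i : \sum_a Q i a * d a = \sum_a (Q i a - delta) * d a.
  under [RHS]eq_bigr do rewrite mulrBl.
  by rewrite sumrB -mulr_sumr d_sum0 mulr0 subr0.
apply: (@le_trans _ _ (\sum_i \sum_a (Q i a - delta) * `|d a|)).
  apply: ler_sum => i _; rewrite shift; apply: le_trans (ler_norm_sum _ _ _) _.
  apply: ler_sum => a _; rewrite normrM ger0_norm // subr_ge0; exact: Q_ge.
rewrite exchange_big /= mulr_sumr; apply: ler_sum => a _.
by rewrite -mulr_suml sumrB Q_col sumr_const card_ord mulr_natl.
Qed.

Lemma coldist_mul (R : numDomainType) m p n (Q : 'M[R]_(m, p)) (M : 'M[R]_(p, n))
    (delta : R) j l :
  (forall i a, delta <= Q i a) -> (forall a, \sum_i Q i a = 1) ->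
  \sum_a M a j = \sum_a M a l ->
  coldist (Q *m M) j l <= (1 - m%:R * delta) * coldist M j l.
Proof.
move=> Q_ge Q_col M_sums.
have -> : coldist (Q *m M) j l = \sum_i `|\sum_a Q i a * (M a j - M a l)|.
  apply: eq_bigr => i _; rewrite !mxE -sumrB.
  by under eq_bigr do rewrite -mulrBr.
by apply: contract_zero_sum => //; rewrite sumrB M_sums subrr.
Qed.

Lemma connect_cross (T : finType) (e : rel T) (A : {set T}) a b :
  connect e a b -> a \in A -> b \notin A ->
  exists x y, [/\ e x y, x \in A & y \notin A].
Proof.
move/connectP => [p pth ->]; elim: p a pth => /= [|c p IH] a.
  by move=> _ Ha Hb; rewrite Ha in Hb.
move/andP => [eac pth] Ha Hb.
case Hc: (c \in A); first exact: (IH c pth Hc Hb).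
by exists a, c; rewrite Hc.
Qed.

Fixpoint bprod (R : pzRingType) n (W : nat -> 'M[R]_n) (s k : nat) : 'M[R]_n :=
  if k is k'.+1 then W (s + k')%N *m bprod W s k' else 1%:M.

Lemma bprod_split (R : pzRingType) n (W : nat -> 'M[R]_n) s a b :
  bprod W s (a + b) = bprod W (s + a) b *m bprod W s a.
Proof.
elim: b => [|b IH]; first by rewrite addn0 mul1mx.
by rewrite addnS /= IH mulmxA addnA.
Qed.

Section BackwardProducts.

Variables (R : numDomainType) (n : nat) (W : nat -> 'M[R]_n).
Hypothesis W_ge0 : forall t i j, 0 <= W t i j.
Hypothesis W_col : forall t j, \sum_i W t i j = 1.

Lemma bprod_ge0 s k i j : 0 <= bprod W s k i j.
Proof.
elim: k i j => [|k IH] i j /=; first by rewrite mxE; case: (i == j).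
by rewrite mxE; apply: sumr_ge0 => a _; exact: mulr_ge0.
Qed.

Lemma bprod_col s k j : \sum_i bprod W s k i j = 1.
Proof.
elim: k j => [|k IH] j /=.
  rewrite (bigD1 j) //= mxE eqxx big1 ?addr0 // => i Hi.
  by rewrite mxE (negbTE Hi).
under eq_bigr do rewrite mxE.
rewrite exchange_big /=.
under eq_bigr do rewrite -mulr_suml W_col mul1r.
exact: IH.
Qed.

Lemma bprod_coldist_mono s k r j l :
  coldist (bprod W s (k + r)) j l <= coldist (bprod W s k) j l.
Proof.
elim: r => [|r IH]; first by rewrite addn0.
apply: le_trans IH; rewrite addnS /=.
have := @coldist_mul R n n n (W (s + (k + r))%N) (bprod W s (k + r)) 0 j l.
by rewrite mulr0 subr0 mul1r !bprod_col; apply.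
Qed.

Lemma bprod_coldist_le2 s k j l : coldist (bprod W s k) j l <= 2.
Proof.
apply: le_trans (_ : \sum_a (`|bprod W s k a j| + `|bprod W s k a l|) <= _).
  apply: ler_sum => a _; exact: ler_normB.
rewrite big_split /=.
under eq_bigr do rewrite ger0_norm ?bprod_ge0 //.
under [X in _ + X]eq_bigr do rewrite ger0_norm ?bprod_ge0 //.
by rewrite !bprod_col.
Qed.

Lemma bprod_edge (beta : R) s k (a b j : 'I_n) :
  beta <= W (s + k)%N b a -> beta * bprod W s k a j <= bprod W s k.+1 b j.
Proof.
move=> Wba; rewrite /= mxE (bigD1 a) //=.
apply: (@le_trans _ _ (W (s + k)%N b a * bprod W s k a j)).
  by apply: ler_wpM2r => //; exact: bprod_ge0.
rewrite lerDl; apply: sumr_ge0 => c _; apply: mulr_ge0 => //; exact: bprod_ge0.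
Qed.

Section UniformConnectivity.

Variables (E : nat -> rel 'I_n) (beta : R) (L : nat).
Hypothesis beta_ge0 : 0 <= beta.
Hypothesis W_diag : forall t i, beta <= W t i i.
Hypothesis W_edge : forall t (i j : 'I_n), E t j i -> beta <= W t i j.
Hypothesis window_conn : forall t, strongly_connected (union_rel E t L).

(* Thanks to the self-loops, a lower bound beta^k on an entry survives. *)
Lemma bprod_stay s k r (i j : 'I_n) :
  beta ^+ k <= bprod W s k i j -> beta ^+ (k + r) <= bprod W s (k + r) i j.
Proof.
move=> H; elim: r => [|r IH]; first by rewrite addn0.
rewrite addnS exprS; apply: le_trans (@bprod_edge beta s (k + r) i i j (W_diag _ i)).
exact: ler_wpM2l.
Qed.

Definition reached s (j : 'I_n) q : {set 'I_n} :=
  [set x | beta ^+ (q * L) <= bprod W s (q * L) x j].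

Lemma reached_src s j q : j \in reached s j q.
Proof.
rewrite inE; have := @bprod_stay s 0 (q * L) j j; rewrite add0n; apply.
by rewrite expr0 /= mxE eqxx.
Qed.

Lemma reached_mono s j q : reached s j q \subset reached s j q.+1.
Proof.
apply/fintype.subsetP => x; rewrite !inE => Hx.
by have := @bprod_stay s (q * L) L x j Hx; rewrite -mulSnr.
Qed.

Lemma reached_spread s j q (x y : 'I_n) :
  union_rel E (s + q * L) L x y -> x \in reached s j q -> y \in reached s j q.+1.
Proof.
move=> /existsP [k Exy]; rewrite !inE => Hx.
have Hk : (q * L + k.+1 + (L - k.+1) = q.+1 * L)%N by have := ltn_ord k; lia.
have Eyx : beta <= W (s + (q * L + k))%N y x by apply: W_edge; rewrite addnA.
rewrite -Hk; apply: bprod_stay; rewrite addnS exprS.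
apply: le_trans (@bprod_edge beta s (q * L + k) x y j Eyx).
by apply: ler_wpM2l => //; exact: bprod_stay.
Qed.

Lemma reached_proper s j q :
  reached s j q != [set: 'I_n] -> reached s j q \proper reached s j q.+1.
Proof.
move=> not_full.
have [b Hb] : exists b, b \notin reached s j q.
  apply/fintype.existsP; apply: contraR not_full => /fintype.existsPn all_in.
  by apply/eqP/setP => x; rewrite finset.in_setT (negPn (all_in x)).
have [x [y [Exy Hx Hy]]] :=
  connect_cross (window_conn (s + q * L) j b) (reached_src s j q) Hb.
apply/properP; split; first exact: reached_mono.
by exists y => //; exact: reached_spread Exy Hx.
Qed.

Lemma reached_card s j q : (minn q.+1 n <= #|reached s j q|)%N.
Proof.
elim: q => [|q IH].
  rewrite (leq_trans (geq_minl _ _)) // card_gt0; apply/set0Pn.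
  by exists j; exact: reached_src.
have [full|not_full] := eqVneq (reached s j q) [set: 'I_n].
  have -> : reached s j q.+1 = [set: 'I_n].
    by apply/eqP; rewrite finset.eqEsubset finset.subsetT -full reached_mono.
  by rewrite cardsT card_ord geq_minr.
by have := proper_card (reached_proper not_full); lia.
Qed.

Lemma bprod_pos s (i j : 'I_n) : beta ^+ (n * L) <= bprod W s (n * L) i j.
Proof.
have full : reached s j n = [set: 'I_n].
  apply/eqP; rewrite eqEcard finset.subsetT cardsT card_ord /=.
  by have := reached_card s j n; rewrite (minn_idPr (leqnSn n)).
by have := finset.in_setT i; rewrite -full inE.
Qed.

Lemma bprod_coldist_block s k j l :
  coldist (bprod W s (k + n * L)) j l
    <= (1 - n%:R * beta ^+ (n * L)) * coldist (bprod W s k) j l.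
Proof.
rewrite bprod_split; apply: coldist_mul.
- by move=> i a; exact: bprod_pos.
- by move=> a; exact: bprod_col.
- by rewrite !bprod_col.
Qed.

(* The contraction factor is nonnegative: the n entries of a column, each at
   least beta^(nL), sum to 1. *)
Lemma block_rate_ge0 (j : 'I_n) : 0 <= 1 - n%:R * beta ^+ (n * L).
Proof.
rewrite subr_ge0; apply: le_trans (_ : \sum_a bprod W 0 (n * L) a j <= 1).
  have -> : n%:R * beta ^+ (n * L) = \sum_(a : 'I_n) beta ^+ (n * L).
    by rewrite sumr_const card_ord mulr_natl.
  by apply: ler_sum => a _; exact: bprod_pos.
by rewrite bprod_col.
Qed.

Lemma bprod_coldist_geom s q j l :
  coldist (bprod W s (q * (n * L))) j l <= (1 - n%:R * beta ^+ (n * L)) ^+ q * 2.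
Proof.
elim: q => [|q IH]; first by rewrite mul0n expr0 mul1r bprod_coldist_le2.
rewrite mulSnr; apply: le_trans (bprod_coldist_block _ _ _ _) _.
by rewrite exprS -mulrA; apply: ler_wpM2l => //; exact: block_rate_ge0.
Qed.

End UniformConnectivity.

End BackwardProducts.

Lemma expr_small (R : archiRealFieldType) (c e : R) :
  0 <= c -> c < 1 -> 0 < e -> exists N, c ^+ N <= e.
Proof.
move=> c_ge0 c_lt1 e_gt0.
have c_norm : `|c| < 1 by rewrite ger0_norm.
have /cvgrPdist_le /(_ e e_gt0) [N _ HN] := cvg_expr c_norm.
exists N; have := HN N (leqnn N).
by rewrite /= sub0r normrN ger0_norm // exprn_ge0.
Qed.

Lemma weighted_ratio_dev (R : realFieldType) n (p y : 'I_n -> R) (j : 'I_n) (D : R) :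
  (forall l, 0 <= y l) -> \sum_l y l = n%:R -> (forall l, `|p l - p j| <= D) ->
  0 < \sum_l p l * y l ->
  `|n%:R^-1 * y j - p j * y j / \sum_l p l * y l| <= y j * D / \sum_l p l * y l.
Proof.
move=> y_ge0 y_sum p_close; set z := \sum_l p l * y l => z_gt0.
have n_gt0 : 0 < n%:R :> R by rewrite ltr0n (leq_ltn_trans (leq0n j) (ltn_ord j)).
have dev : `|z - n%:R * p j| <= n%:R * D.
  rewrite -y_sum !mulr_suml -sumrB; apply: le_trans (ler_norm_sum _ _ _) _.
  apply: ler_sum => l _; rewrite [y l * p j]mulrC -mulrBl normrM (ger0_norm (y_ge0 l)).
  by rewrite mulrC; apply: ler_wpM2l.
have -> : n%:R^-1 * y j - p j * y j / z = y j * (z - n%:R * p j) / (n%:R * z).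
  by field; rewrite !gt_eqF.
have -> : y j * D / z = y j * (n%:R * D) / (n%:R * z) by field; rewrite !gt_eqF.
rewrite normrM normfV normrM (ger0_norm (y_ge0 j)) (gtr0_norm (mulr_gt0 n_gt0 z_gt0)).
by apply: ler_wpM2r; [rewrite invr_ge0 ltW ?mulr_gt0 | exact: ler_wpM2l].
Qed.

Local Open Scope classical_set_scope.
Local Open Scope ring_scope.

Section PushSum.

Variables (R : realType) (n : nat) (W : nat -> 'M[R]_n) (beta : R).
Hypothesis W_ge0 : forall t i j, 0 <= W t i j.
Hypothesis W_col : forall t j, \sum_i W t i j = 1.
Hypothesis beta_gt0 : 0 < beta.
Hypothesis W_diag : forall t i, beta <= W t i i.

(* Column stochasticity preserves the total mass n of y. *)
Lemma ypush_sum t : \sum_i ypush W t i ord0 = n%:R.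
Proof.
elim: t => [|t IH] /=.
  by under eq_bigr do rewrite mxE; rewrite sumr_const card_ord.
under eq_bigr do rewrite mxE.
rewrite exchange_big /=.
under eq_bigr do rewrite -mulr_suml W_col mul1r.
exact: IH.
Qed.

(* Positive self-weights keep every y_i(t) positive, so S(t) is well defined. *)
Lemma ypush_gt0 t i : 0 < ypush W t i ord0.
Proof.
elim: t i => [|t IH] i /=; first by rewrite mxE ltr01.
have Wii_gt0 : 0 < W t i i := lt_le_trans beta_gt0 (W_diag t i).
rewrite mxE (bigD1 i) //=; apply: lt_le_trans (mulr_gt0 Wii_gt0 (IH i)) _.
by rewrite lerDl; apply: sumr_ge0 => a _; exact: mulr_ge0 (W_ge0 _ _ _) (ltW (IH a)).
Qed.

Lemma ypush_bprod s k : ypush W (s + k) = bprod W s k *m ypush W s.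
Proof.
elim: k => [|k IH]; first by rewrite addn0 mul1mx.
by rewrite addnS /= IH mulmxA.
Qed.

Lemma Sprod_bprod tau k i j :
  Sprod W tau k i j =
    bprod W tau k.+1 i j * ypush W tau j ord0 / ypush W (tau + k.+1) i ord0.
Proof.
elim: k i j => [|k IH] i j.
  by rewrite /= /Smat mxE mulmx1 addn0 addn1.
rewrite /= mxE mxE; under eq_bigr => a _ do rewrite IH /Smat mxE.
rewrite -!mulrA mulr_suml !addnS; apply: eq_bigr => a _.
have ya := ypush_gt0 (tau + k).+1 a; have yi := ypush_gt0 (tau + k).+2 i.
by field; rewrite !gt_eqF.
Qed.

Section UniformConnectivity.

Variables (E : nat -> rel 'I_n) (L : nat).
Hypothesis W_edge : forall t (i j : 'I_n), E t j i -> beta <= W t i j.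
Hypothesis window_conn : forall t, strongly_connected (union_rel E t L).

Lemma window_mass_gt0 (j : 'I_n) : 0 < n%:R * beta ^+ (n * L).
Proof. by rewrite mulr_gt0 ?exprn_gt0 // ltr0n (leq_ltn_trans (leq0n j) (ltn_ord j)). Qed.

Lemma ypush_window_lb s i : n%:R * beta ^+ (n * L) <= ypush W (s + n * L) i ord0.
Proof.
rewrite ypush_bprod mxE -(ypush_sum s) mulr_suml; apply: ler_sum => a _.
rewrite mulrC; apply: ler_wpM2r; first exact: ltW (ypush_gt0 s a).
exact: (bprod_pos W_ge0 (ltW beta_gt0) W_diag W_edge window_conn).
Qed.

Lemma bprod_coldist_vanish s (j : 'I_n) e :
  0 < e -> exists K, forall k l, (K <= k)%N -> coldist (bprod W s k) l j <= e.
Proof.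
move=> e_gt0; set c := 1 - n%:R * beta ^+ (n * L).
have c_ge0 : 0 <= c :=
  block_rate_ge0 W_ge0 W_col (ltW beta_gt0) W_diag W_edge window_conn j.
have c_lt1 : c < 1 by have := window_mass_gt0 j; rewrite /c; lra.
have [N cN] := expr_small c_ge0 c_lt1 (divr_gt0 e_gt0 (ltr0Sn R 1)).
exists (N * (n * L))%N => k l Nk; rewrite -(subnKC Nk).
apply: le_trans (bprod_coldist_mono W_ge0 W_col _ _ _ _ _) _.
apply: le_trans
  (bprod_coldist_geom W_ge0 W_col (ltW beta_gt0) W_diag W_edge window_conn _ _ _ _) _.
by rewrite -ler_pdivlMr.
Qed.

Lemma Sprod_cvg tau (i j : 'I_n) :
  (fun k => Sprod W tau k i j) @ \oo --> n%:R^-1 * ypush W tau j ord0.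
Proof.
set Y := ypush W tau j ord0; set d := n%:R * beta ^+ (n * L).
have d_gt0 : 0 < d := window_mass_gt0 j.
have Y_gt0 : 0 < Y := ypush_gt0 tau j.
apply/cvgrPdist_le => e e_gt0.
have [K HK] := bprod_coldist_vanish tau j (divr_gt0 (mulr_gt0 e_gt0 d_gt0) Y_gt0).
exists (K + n * L)%N => // k /= Kk.
have z_lb : d <= ypush W (tau + k.+1) i ord0.
  by rewrite -(subnK (_ : n * L <= tau + k.+1)%N) ?ypush_window_lb //; lia.
rewrite Sprod_bprod; move: z_lb; rewrite ypush_bprod mxE => z_lb.
apply: le_trans (weighted_ratio_dev _ (ypush_sum tau) _ (lt_le_trans d_gt0 z_lb)) _.
- by move=> l; exact: ltW (ypush_gt0 tau l).
- by move=> l; apply: le_trans (coldist_entry _ i l j) (HK _ _ _); lia.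
rewrite ler_pdivrMr ?(lt_le_trans d_gt0 z_lb) //.
rewrite mulrC divfK ?gt_eqF //.
by apply: ler_wpM2l; [exact: ltW | exact: z_lb].
Qed.

End UniformConnectivity.

End PushSum.

Theorem lemma4 (R : realType) (n : nat) (E : nat -> rel 'I_n)
  (W : nat -> 'M[R]_n) (beta : R) :
  (forall t (i : 'I_n), E t i i) ->
  (forall t (i j : 'I_n), E t j i -> 0 < W t i j) ->
  (forall t (i j : 'I_n), ~~ E t j i -> W t i j = 0) ->
  0 < beta ->
  (forall t (i j : 'I_n), E t j i -> beta <= W t i j) ->
  (forall t (i : 'I_n), \sum_(j | E t i j) W t j i = 1) ->
  uniformly_strongly_connected E ->
  forall (tau : nat) (i j : 'I_n),
    (fun k : nat => Sprod W tau k i j) @ \oo --> (n%:R)^-1 * ypush W tau j ord0.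
Proof.
move=> self_loop W_pos W_off beta_gt0 W_edge W_out [L [_ window_conn]] tau i j.
have W_ge0 t (a b : 'I_n) : 0 <= W t a b.
  by have [/W_pos/ltW // | /W_off ->] := boolP (E t b a).
have W_col t (a : 'I_n) : \sum_b W t b a = 1.
  rewrite -(W_out t a) [RHS]big_mkcond /=; apply: eq_bigr => b _.
  by case: ifP => // /negbT /W_off.
have W_diag t (a : 'I_n) : beta <= W t a a := W_edge t a a (self_loop t a).
exact: (Sprod_cvg W_ge0 W_col beta_gt0 W_diag W_edge window_conn).
Qed.
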